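(* For all $a,b\in\mathbb{C}$ and integers $n\ge0$, $$\sum_{k=0}^n\binom{n}{k}a^kb^{n-k}H_k(2)=H_n(2)(a+b)^n+2\sum_{k=1}^n(a+b)^{n-k}b^k\,\frac{H_{k-1}-H_{n-k}}{k}.$$
   Context: $H_n=\sum_{k=1}^n\frac1k$ (with $H_0=0$) and $H_n^{(2)}=\sum_{k=1}^n\frac1{k^2}$. The multiple harmonic-like number $H_n(2)=\sum_{1\le k_1+k_2\le n}\frac{1}{k_1k_2}$ (over positive integers), which equals $H_n^2-H_n^{(2)}$. Convention $0^0=1$. *)

From HB Require Import structures.
From mathcomp Require Import all_boot all_order all_algebra.
From mathcomp Require Import complex.
From mathcomp Require Import reals Rstruct.
Set Implicit Arguments. Unset Strict Implicit. Unset Printing Implicit Defensive.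
Import Order.TTheory GRing.Theory Num.Theory.
Local Open Scope ring_scope.

Definition CC : Type := complex Rdefinitions.R.

Definition harm {F : fieldType} (n : nat) : F :=
  \sum_(1 <= k < n.+1) (k%:R)^-1.

Definition harm2 {F : fieldType} (n : nat) : F :=
  \sum_(1 <= k1 < n.+1) \sum_(1 <= k2 < n.+1 | (k1 + k2 <= n)%N)
     ((k1 * k2)%N%:R)^-1.

From HB Require Import structures.
From mathcomp Require Import all_boot all_order all_algebra.
From mathcomp Require Import complex.
From mathcomp Require Import reals Rstruct.
From mathcomp Require Import ring zify.
Set Implicit Arguments. Unset Strict Implicit. Unset Printing Implicit Defensive.
Import GRing.Theory Num.Theory.
Local Open Scope ring_scope.

(* Writing a = (a + b) - b, the left-hand side is a binomial transform of
   k |-> H_k(2), which re-expands in powers of a + b with coefficients given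
   by iterated differences Δ^m H(2) where (Δ f)(k) = f k - f (k + 1).  Since
   H_{k+1}(2) - H_k(2) = 2 H_k / (k + 1), an induction on m gives
   (Δ^m H(2))(p) = 2 (H_{m-1} - H_p) / (m C(p + m, m)) for m >= 1, and the
   binomial coefficients cancel. *)

Section BinomialTransform.
Variable R : comPzRingType.

Definition diff (f : nat -> R) : nat -> R := fun k => f k - f k.+1.
Definition diffn (m : nat) (f : nat -> R) : nat -> R := iter m diff f.

Lemma diffnSr m f k : diffn m (fun j => f j.+1) k = diffn m f k.+1.
Proof. by elim: m k => [|m IH] k //=; rewrite /diff -/(diffn m _) !IH. Qed.

Lemma diffnS m f k : diffn m.+1 f k = diffn m f k - diffn m f k.+1.
Proof. by []. Qed.

Lemma sum_binS n (X : nat -> R) :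
  \sum_(m < n.+2) 'C(n.+1, m)%:R * X m =
  \sum_(m < n.+1) 'C(n, m)%:R * X m + \sum_(m < n.+1) 'C(n, m)%:R * X m.+1.
Proof.
rewrite big_ord_recl.
have -> : \sum_(i < n.+1) 'C(n.+1, lift ord0 i)%:R * X (lift ord0 i)
   = \sum_(i < n.+1) 'C(n, i.+1)%:R * X i.+1 + \sum_(i < n.+1) 'C(n, i)%:R * X i.+1.
  by rewrite -big_split /=; apply: eq_bigr => i _; rewrite binS natrD mulrDl.
rewrite addrA; congr (_ + _).
rewrite big_ord_recr /= (bin_small (ltnSn n)) mul0r addr0.
by rewrite [in RHS]big_ord_recl /= !bin0.
Qed.

Lemma binomial_transform_diffn (a b : R) n (f : nat -> R) :
  \sum_(k < n.+1) 'C(n, k)%:R * a ^+ k * b ^+ (n - k) * f k =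
  \sum_(m < n.+1) 'C(n, m)%:R * (a + b) ^+ (n - m) * b ^+ m * diffn m f (n - m).
Proof.
elim: n f => [|n IH] f; first by rewrite !big_ord1 /= !expr0 !mulr1.
have -> : \sum_(k < n.+2) 'C(n.+1, k)%:R * a ^+ k * b ^+ (n.+1 - k) * f k =
    b * \sum_(k < n.+1) 'C(n, k)%:R * a ^+ k * b ^+ (n - k) * f k
  + a * \sum_(k < n.+1) 'C(n, k)%:R * a ^+ k * b ^+ (n - k) * f k.+1.
  have := sum_binS n (fun k => a ^+ k * b ^+ (n.+1 - k) * f k).
  under eq_bigr do rewrite !mulrA.
  move=> ->; rewrite !mulr_sumr; congr (_ + _); apply: eq_bigr => -[i /= lt_in] _.
    by rewrite subSn // exprS; ring.
  by rewrite subSS exprS; ring.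
have -> : \sum_(m < n.+2) 'C(n.+1, m)%:R * (a + b) ^+ (n.+1 - m) * b ^+ m
                            * diffn m f (n.+1 - m) =
    (a + b) * \sum_(m < n.+1) 'C(n, m)%:R * (a + b) ^+ (n - m) * b ^+ m
                                * diffn m (fun k => f k.+1) (n - m)
  + b * (\sum_(m < n.+1) 'C(n, m)%:R * (a + b) ^+ (n - m) * b ^+ m
                           * diffn m f (n - m)
       - \sum_(m < n.+1) 'C(n, m)%:R * (a + b) ^+ (n - m) * b ^+ m
                           * diffn m (fun k => f k.+1) (n - m)).
  have := sum_binS n (fun m => (a + b) ^+ (n.+1 - m) * b ^+ m * diffn m f (n.+1 - m)).
  under eq_bigr do rewrite !mulrA.
  move=> ->; rewrite -sumrB !mulr_sumr; congr (_ + _); apply: eq_bigr => -[i /= lt_in] _.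
    by rewrite subSn // diffnSr exprS; ring.
  by rewrite subSS /diff diffnSr exprS; ring.
by rewrite (IH f) (IH (fun k => f k.+1)); ring.
Qed.

End BinomialTransform.

Lemma mul_bin_addS p m : (p.+1 * 'C(p.+1 + m, m) = (p + m).+1 * 'C(p + m, m))%N.
Proof. by rewrite mul_bin_down subSn ?leq_addl // addnK addSn. Qed.

Lemma mul_bin_addSS p m : (m.+1 * 'C(p + m.+1, m.+1) = (p + m).+1 * 'C(p + m, m))%N.
Proof. by rewrite mul_bin_diag addnS. Qed.

Section HarmonicNumbers.
Variable F : numFieldType.

Lemma natr_gt0_neq0 k : (0 < k)%N -> k%:R != 0 :> F.
Proof. by rewrite pnatr_eq0 -lt0n. Qed.

Lemma harm0 : harm 0 = 0 :> F.
Proof. by rewrite /harm big_geq. Qed.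

Lemma harmS n : harm n.+1 = harm n + n.+1%:R^-1 :> F.
Proof. by rewrite /harm big_nat_recr. Qed.

Lemma harm_rev n : \sum_(1 <= k < n.+1) (n.+1 - k)%:R^-1 = harm n :> F.
Proof.
rewrite big_nat_rev /harm; apply: eq_big_nat => k /andP[k_gt0 k_le].
by congr (_%:R^-1); lia.
Qed.

Lemma harm2E n : harm2 n = \sum_(1 <= k < n.+1) k%:R^-1 * harm (n - k) :> F.
Proof.
rewrite /harm2; apply: eq_big_nat => k /andP[k_gt0 k_le].
rewrite big_mkcond (big_cat_nat _ (n := (n - k).+1)) /=; [|lia|lia].
rewrite [X in _ + X]big_nat_cond [X in _ + X]big1 ?addr0; last first.
  by move=> j /andP[/andP[j_gt j_le] _]; rewrite ifF //; lia.
rewrite /harm mulr_sumr; apply: eq_big_nat => j /andP[j_gt0 j_le].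
by rewrite ifT; [rewrite natrM invfM | lia].
Qed.

Lemma inv_mul_partial_fraction n k : (0 < k <= n)%N ->
  (k%:R * (n.+1 - k)%:R)^-1 = n.+1%:R^-1 * (k%:R^-1 + (n.+1 - k)%:R^-1) :> F.
Proof.
move=> /andP[k_gt0 k_le].
have natrB_nk : (n.+1 - k)%:R = n.+1%:R - k%:R :> F by rewrite natrB // leqW.
have nk_neq0 : n.+1%:R - k%:R != 0 :> F by rewrite -natrB_nk natr_gt0_neq0 //; lia.
rewrite natrB_nk; field.
by rewrite (addrC 1) natr1 nk_neq0 !natr_gt0_neq0.
Qed.

Lemma harm2S n : harm2 n.+1 = harm2 n + 2 * harm n / n.+1%:R :> F.
Proof.
rewrite !harm2E big_nat_recr //= subnn harm0 mulr0 addr0.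
have -> : \sum_(1 <= k < n.+1) k%:R^-1 * harm (n.+1 - k)
   = \sum_(1 <= k < n.+1) (k%:R^-1 * harm (n - k) +
        n.+1%:R^-1 * (k%:R^-1 + (n.+1 - k)%:R^-1)) :> F.
  apply: eq_big_nat => k /andP[k_gt0 k_le].
  rewrite -inv_mul_partial_fraction ?k_gt0 //= subSn // harmS invfM -subSn //.
  by rewrite mulrDr.
rewrite big_split /= -mulr_sumr big_split /= harm_rev.
by congr (_ + _); rewrite -[\sum_(1 <= i < n.+1) _]/(harm n) mulr_natl mulr2n mulrC.
Qed.

Lemma diffn_harm2 m p :
  diffn m.+1 (@harm2 F) p = 2 * (harm m - harm p) / (m.+1 * 'C(p + m.+1, m.+1))%:R.
Proof.
elim: m p => [|m IH] p.
  by rewrite diffnS /diffn /= harm2S harm0 mul1n addn1 bin1; field;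
    rewrite addrC natr1 natr_gt0_neq0.
set c := 'C(p + m.+1, m.+1).
have P_neq0 : p.+1%:R != 0 :> F by rewrite natr_gt0_neq0.
have M_neq0 : m.+1%:R != 0 :> F by rewrite natr_gt0_neq0.
have PM_neq0 : p.+1%:R + m.+1%:R != 0 :> F by rewrite -natrD natr_gt0_neq0.
have c_neq0 : c%:R != 0 :> F by rewrite natr_gt0_neq0 // bin_gt0 leq_addl.
have PM : (p + m.+1).+1%:R = p.+1%:R + m.+1%:R :> F by rewrite -natrD addSn.
have C_up : 'C(p.+1 + m.+1, m.+1)%:R = (p.+1%:R + m.+1%:R) * c%:R / p.+1%:R :> F.
  by rewrite -[LHS](mulKf P_neq0) -natrM mul_bin_addS natrM PM mulrC.
rewrite diffnS !IH (mul_bin_addSS p m.+1) !natrM C_up PM -/c !harmS.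
by field; rewrite !(addrC 1) !natr1 P_neq0 M_neq0 PM_neq0 c_neq0.
Qed.

End HarmonicNumbers.

Theorem corollary4 (a b : CC) (n : nat) :
  \sum_(k < n.+1) ('C(n, k))%:R * a ^+ k * b ^+ (n - k) * harm2 k
  = harm2 n * (a + b) ^+ n
    + 2 * \sum_(1 <= k < n.+1)
            (a + b) ^+ (n - k) * b ^+ k * ((harm k.-1 - harm (n - k)) / k%:R).
Proof.
rewrite binomial_transform_diffn big_ord_recl bin0 subn0 expr0 mulr1 mul1r.
rewrite mulrC; congr (_ + _).
rewrite big_add1 big_mkord mulr_sumr; apply: eq_bigr => k _.
rewrite lift0 diffn_harm2 subnK //.
have C_neq0 : 'C(n, k.+1)%:R != 0 :> CC by rewrite natr_gt0_neq0 // bin_gt0.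
by rewrite natrM; field; rewrite (addrC 1) natr1 C_neq0 natr_gt0_neq0.
Qed.
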